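(* In the setting below, for every $\ell\ge1$, $$\operatorname{rank}(q_\ell\otimes k)=\binom{n+\ell-1}{\ell}\binom{m-n}{\ell},$$ with the convention $\binom{a}{b}=0$ if $b>a$ (so $q_\ell\otimes k=0$ for $\ell\ge m-n+1$).
   Context: Setting: $R=k[x_{ij}\mid1\le i\le n,1\le j\le m]$ over a field $k$, $n\le m$; $F$ free with basis $f_1,\dots,f_m$, $G$ free with basis $g_1,\dots,g_n$, dual basis $g_i^*$; $D_\ell(G^* )$ the divided power with basis $g^{*(\alpha)}=g_1^{*(\alpha_1)}\cdots g_n^{*(\alpha_n)}$, $|\alpha|=\ell$. Fix $\sigma=(\sigma_1<\dots<\sigma_n)\subseteq[m]$, $f_\sigma=f_{\sigma_1}\wedge\cdots\wedge f_{\sigma_n}$. $U$ is free with basis $e_{ij}$, $1\le i\le n$, $j\notin\sigma$, $e_{(i,j)}=e_{ij}$. For $\tau=(\tau_1<\dots<\tau_\ell)$ and $\alpha\in\mathbb Z^n_{\ge 0}$, $\mathcal L_{\alpha,\tau}$ is the set of sets $L=\{(r_1,\tau_1),\dots,(r_\ell,\tau_\ell)\}$ with $r_s\in\{i:\alpha_i\neq 0\}$ and $|\{s:r_s=j\}|=\alpha_j$ for all $j$, written $L=(L_1,\dots,L_\ell)$, $L_s=(r_s,\tau_s)$. The map $q_\ell:D_\ell(G^* )\otimes\bigwedge^{n+\ell}F\to\bigwedge^\ell U$ sends $g^{*(\alpha)}\otimes f_{\tau_1}\wedge\cdots\wedge f_{\tau_\ell}\wedge f_\sigma\mapsto\sum_{L\in\mathcal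 L_{\alpha,\tau}}e_{L_1}\wedge\cdots\wedge e_{L_\ell}$ for $\tau\cap\sigma=\varnothing$, $|\alpha|=\ell$, and sends each basis element $g^{*(\alpha)}\otimes f_\rho$ with $\rho\not\supseteq\sigma$ to $0$. *)

From HB Require Import structures.
From mathcomp Require Import all_boot all_order all_algebra.

Import GRing.Theory.
Local Open Scope ring_scope.

(* Index sets are 0-based: [n] = 'I_n, [m] = 'I_m.  sigma : {set 'I_m}, #|sigma| = n.

   Basis of D_l(G^* ) (x) /\^{n+l} F : pairs (alpha, rho) with
     alpha : 'I_n -> nat (stored in 'I_l.+1), sum alpha = l   (g^{*(alpha)})
     rho   : subset of [m] of size n+l                        (f_rho, wedge in increasing order)
   Basis of /\^l U : subsets S of {(i,j) : j \notin sigma} of size l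
     (e_S = wedge of its elements listed in increasing order of j, ties by i;
      U's basis e_{ij} is thus ordered by (j,i)). *)

Definition dom_ok (n m l : nat) (p : {ffun 'I_n -> 'I_l.+1} * {set 'I_m}) : bool :=
  ((\sum_(i < n) (p.1 i : nat))%N == l) && (#|p.2| == n + l)%N.

Definition cod_ok (n m l : nat) (sigma : {set 'I_m}) (S : {set 'I_n * 'I_m}) : bool :=
  (#|S| == l)%N && [forall x in S, x.2 \notin sigma].

Definition dom_idx (n m l : nat) := {p : {ffun 'I_n -> 'I_l.+1} * {set 'I_m} | dom_ok n m l p}.
Definition cod_idx (n m l : nat) (sigma : {set 'I_m}) :=
  {S : {set 'I_n * 'I_m} | cod_ok n m l sigma S}.

(* L \in \mathcal L_{alpha,tau}: L a set of pairs (r_s, tau_s), exactly one for each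
   tau_s in tau and none with second coordinate outside tau, with
   |{s : r_s = i}| = alpha_i for every i. *)
Definition in_Lset (n m l : nat) (alpha : {ffun 'I_n -> 'I_l.+1}) (tau : {set 'I_m})
  (L : {set 'I_n * 'I_m}) : bool :=
  [forall j : 'I_m, #|[set i | (i, j) \in L]| == (j \in tau : nat)] &&
  [forall i : 'I_n, #|[set j | (i, j) \in L]| == (alpha i : nat)].

(* f_rho = (-1)^(number of pairs s < t, s in sigma, t in tau) f_tau /\ f_sigma,
   where tau = rho \ sigma (when sigma \subset rho). *)
Definition wedge_sign (k : ringType) (m : nat) (tau sigma : {set 'I_m}) : k :=
  (-1) ^+ #|[set p : 'I_m * 'I_m | (p.1 \in tau) && (p.2 \in sigma) && (p.2 < p.1)%N]|.

(* The coefficient of e_S in q_l(g^{*(alpha)} (x) f_rho).  Since e_{L_1} /\ ... /\ e_{L_l}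
   (listed with tau_1 < ... < tau_l) is already in the (j,i)-increasing order,
   it equals the basis vector e_L. *)
Definition q_coef (k : ringType) (n m l : nat) (sigma : {set 'I_m})
  (alpha : {ffun 'I_n -> 'I_l.+1}) (rho : {set 'I_m}) (S : {set 'I_n * 'I_m}) : k :=
  if sigma \subset rho then
    wedge_sign k m (rho :\: sigma) sigma *
    \sum_(L : {set 'I_n * 'I_m} | in_Lset n m l alpha (rho :\: sigma) L) (L == S)%:R
  else 0.

Definition q_mx (k : ringType) (n m l : nat) (sigma : {set 'I_m}) :
  'M[k]_(#|{: dom_idx n m l}|, #|{: cod_idx n m l sigma}|) :=
  \matrix_(a, b)
    q_coef k n m l sigma (val (enum_val a)).1 (val (enum_val a)).2 (val (enum_val b)).

From HB Require Import structures.
From mathcomp Require Import all_boot all_order all_algebra.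
Import GRing.Theory.
Local Open Scope ring_scope.

(* The coefficient of e_S in q_l(g^{*(alpha)} (x) f_rho) is nonzero exactly when
   sigma is contained in rho and S is an element of L_{alpha, rho \ sigma}.  An
   element S of some L_{alpha,tau} determines both alpha (its row counts) and tau
   (its set of second coordinates), hence also rho = tau u sigma.  So every column
   of the matrix of q_l (x) k has at most one nonzero entry, and the rank of such a
   matrix is the number of its nonzero rows (first part of the file).  A row
   (alpha, rho) is nonzero iff sigma is contained in rho, because L_{alpha,tau} is
   nonempty whenever |tau| = |alpha| (a distribution lemma).  Counting the pairs
   (alpha, rho), i.e. the compositions of l into n parts times the (n+l)-subsets of
   [m] containing sigma, gives binom(n+l-1, l) * binom(m-n, l). *)

Section ColumnSparseRank.

Variables (F : fieldType) (p q : nat) (A : 'M[F]_(p, q)).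

Definition support_rows : {set 'I_p} := [set i | [exists j, A i j != 0]].

(* Any matrix factors through its nonzero rows, so its rank is at most their number. *)
Lemma rank_le_support_rows : (\rank A <= #|support_rows|)%N.
Proof.
pose g (r : 'I_#|support_rows|) : 'I_p := enum_val r.
have ginj : injective g by exact: enum_val_inj.
pose P : 'M[F]_(p, #|support_rows|) := \matrix_(i, r) (i == g r)%:R.
suff -> : A = P *m rowsub g A by apply: leq_trans (mxrankM_maxr _ _) (rank_leq_row _).
apply/matrixP => i j; rewrite !mxE.
have [iS | iNS] := boolP (i \in support_rows).
  rewrite (bigD1 (enum_rank_in iS i)) //= big1 ?addr0.
    by rewrite !mxE /g enum_rankK_in // eqxx mul1r.
  move=> r /negP nr; rewrite !mxE; case: eqP => [ig | _]; last by rewrite mul0r.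
  by case: nr; apply/eqP/ginj; rewrite -ig /g enum_rankK_in.
rewrite big1.
  by apply/eqP; move: iNS; rewrite inE negb_exists => /forallP /(_ j); rewrite negbK.
move=> r _; rewrite !mxE; case: eqP => [ig | _]; last by rewrite mul0r.
by move: iNS; rewrite ig enum_valP.
Qed.

Lemma rank_submx_le r s (g : 'I_r -> 'I_p) (f : 'I_s -> 'I_q) :
  (\rank (colsub f (rowsub g A)) <= \rank A)%N.
Proof.
have -> : colsub f (rowsub g A) = rowsub g 1%:M *m A *m colsub f 1%:M.
  by rewrite mulmx_colsub mulmx1 -rowsubE.
exact: leq_trans (mxrankM_maxl _ _) (mxrankM_maxr _ _).
Qed.

Hypothesis col_sparse : forall i i' j, A i j != 0 -> A i' j != 0 -> i = i'.

(* Picking one nonzero entry in each nonzero row gives an invertible diagonal minor. *)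
Lemma support_rows_le_rank : (#|support_rows| <= \rank A)%N.
Proof.
pose g (r : 'I_#|support_rows|) : 'I_p := enum_val r.
have ginj : injective g by exact: enum_val_inj.
have row_nz r : exists j, A (g r) j != 0 by have := enum_valP r; rewrite inE => /existsP.
pose f r := xchoose (row_nz r).
have fP r : A (g r) (f r) != 0 := xchooseP (row_nz r).
pose M := colsub f (rowsub g A).
have M_diag : M = diag_mx (\row_r M r r).
  apply/matrixP => r r'; rewrite !mxE; case: eqP => [-> | nr]; first by rewrite mulr1n.
  rewrite mulr0n; apply/eqP/negPn/negP => M_nz.
  by apply: nr; apply: ginj; apply: col_sparse M_nz (fP r').
have M_unit : M \in unitmx.
  rewrite unitmxE M_diag det_diag unitfE prodf_seq_neq0.
  by apply/allP => r _; rewrite !mxE fP.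
by rewrite -(mxrank_unit M_unit) rank_submx_le.
Qed.

Lemma rank_col_sparse : \rank A = #|support_rows|.
Proof. by apply/eqP; rewrite eqn_leq rank_le_support_rows support_rows_le_rank. Qed.

End ColumnSparseRank.

Arguments support_rows {F p q} A.
Arguments rank_col_sparse {F p q} A.

Lemma card_enum_val_preim (T : finType) (P : pred T) :
  #|[set r : 'I_#|T| | P (enum_val r)]| = #|[set x | P x]|.
Proof.
rewrite -(card_imset _ (@enum_val_inj _ _)); apply: eq_card => x; rewrite inE.
apply/imsetP/idP => [[r] | Px]; first by rewrite inE => Pr ->.
by exists (enum_rank x); rewrite ?inE enum_rankK.
Qed.

Lemma card_sub_preim (T : finType) (P Q : pred T) :
  #|[set x : {x | P x} | Q (val x)]| = #|[set x | P x && Q x]|.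
Proof.
rewrite -(card_imset _ val_inj); apply: eq_card => x; rewrite inE.
apply/imsetP/andP => [[y] | [Px Qx]]; first by rewrite inE => Qy ->; split=> //; exact: valP.
by exists (exist _ x Px); rewrite ?inE.
Qed.

Lemma card_fibres (I J : finType) (L : {set I * J}) :
  #|L| = (\sum_i #|[set j | (i, j) \in L]|)%N.
Proof.
rewrite -sum1_card (eq_bigr (fun i => \sum_(j | (i, j) \in L) 1)%N); last first.
  by move=> i _; rewrite sum1dep_card; apply: eq_card => j; rewrite inE.
by rewrite pair_big_dep /=; apply: eq_bigl => -[i j].
Qed.

(* Weak compositions of l into n parts (the exponents alpha with |alpha| = l)
   number binom(n+l-1, l); the bound 'I_l.+1 on each part is no restriction. *)
Lemma card_compositions n l : (1 <= l)%N ->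
  #|[set al : {ffun 'I_n -> 'I_l.+1} | (\sum_i (al i : nat))%N == l]| = 'C(n + l - 1, l).
Proof.
move=> l_gt0; case: n => [|n].
  rewrite bin_small; last by rewrite add0n subn1 ltn_predL.
  by apply: eq_card0 => al; rewrite !inE big_ord0 eq_sym; apply/negbTE; rewrite -lt0n.
rewrite addSn subn1 /= -(bin_sub (leq_addl n l)) addnK -card_ord_partitions.
pose tup (al : {ffun 'I_n.+1 -> 'I_l.+1}) := [tuple al i | i < n.+1].
have tup_inj : injective tup.
  move=> a1 a2 E; apply/ffunP => i.
  by have := congr1 (fun t => tnth t i) E; rewrite !tnth_mktuple.
rewrite -(card_imset _ tup_inj); apply: eq_card => t; rewrite inE.
apply/imsetP/idP => [[al] | sum_t].
  by rewrite inE big_tuple => sum_al ->; under eq_bigr do rewrite tnth_mktuple.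
exists [ffun i => tnth t i].
  by rewrite inE; move: sum_t; rewrite big_tuple; under eq_bigr do rewrite ffunE.
by apply: eq_from_tnth => i; rewrite tnth_mktuple ffunE.
Qed.

Lemma setD_inj_supersets {T : finType} {sigma r1 r2 : {set T}} :
  sigma \subset r1 -> sigma \subset r2 -> r1 :\: sigma = r2 :\: sigma -> r1 = r2.
Proof.
move=> /subsetP s1 /subsetP s2 /setP E; apply/setP => x; have := E x; rewrite !inE.
by case xs: (x \in sigma) => //= _; rewrite (s1 _ xs) (s2 _ xs).
Qed.

(* The (n+l)-subsets of [m] containing a given n-subset sigma correspond to the
   l-subsets of its complement. *)
Lemma card_supersets {m n} l {sigma : {set 'I_m}} : #|sigma| = n ->
  #|[set rho : {set 'I_m} | sigma \subset rho & #|rho| == n + l]| = 'C(m - n, l).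
Proof.
move=> card_sigma.
have card_compl : #|~: sigma| = (m - n)%N.
  have := cardsC sigma; rewrite card_ord card_sigma => split_m.
  by rewrite -[in RHS]split_m addKn.
rewrite -card_compl -cards_draws.
have add_sigma_inj : {in [set tau : {set 'I_m} | tau \subset ~: sigma & #|tau| == l] &,
                      injective (fun tau => tau :|: sigma)}.
  move=> t1 t2; rewrite !inE => /andP[/subsetP h1 _] /andP[/subsetP h2 _] /setP E.
  apply/setP => x; have := E x; rewrite !inE.
  case xs: (x \in sigma); last by rewrite !orbF.
  by move=> _; apply/idP/idP => [/h1 | /h2]; rewrite inE xs.
rewrite -(card_in_imset add_sigma_inj); apply: eq_card => rho; rewrite inE.
apply/andP/imsetP => [[s_rho /eqP card_rho] | [tau]].
  exists (rho :\: sigma); last by rewrite setUC -{1}(setIidPr s_rho) setID.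
  by rewrite inE subDset setUCr subsetT cardsDS // card_rho card_sigma addKn /=.
rewrite inE => /andP[tau_compl /eqP card_tau] ->; split; first exact: subsetUr.
rewrite cardsU card_tau card_sigma addnC.
suff -> : tau :&: sigma = set0 by rewrite cards0 subn0.
by apply/setP => x; rewrite !inE; apply/negP => /andP[/(subsetP tau_compl)]; rewrite inE => /negP.
Qed.

Lemma exists_distribution (I J : finType) (a : I -> nat) (A : {set J}) :
  #|A| = (\sum_i a i)%N -> exists L : {set I * J},
  (forall j, #|[set i | (i, j) \in L]| = (j \in A) :> nat) /\
  (forall i, #|[set j | (i, j) \in L]| = a i).
Proof.
move: {2}#|A| (erefl #|A|) => N; elim: N A a => [|N IH] A a card_A sum_a.
  have a0 i : a i = 0%N.
    by apply/eqP; move/esym/eqP: sum_a; rewrite card_A sum_nat_eq0 => /forall_inP ->.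
  exists set0; split=> [j | i]; last by rewrite a0; apply: eq_card0 => j; rewrite !inE.
  by rewrite (cards0_eq card_A) inE; apply: eq_card0 => i; rewrite !inE.
have [x xA] : exists x, x \in A by apply/set0Pn; rewrite -card_gt0 card_A.
have [i0 a_i0] : exists i0, (0 < a i0)%N.
  have [i1 ? | a0] := pickP (fun i => 0 < a i)%N; first by exists i1.
  by move: sum_a; rewrite card_A big1 // => i _; apply/eqP; rewrite -leqn0 leqNgt a0.
pose a' i := (a i - (i == i0))%N.
have card_A' : #|A :\ x| = N by move: card_A; rewrite (cardsD1 x A) xA add1n => -[].
have sum_a' : #|A :\ x| = (\sum_i a' i)%N.
  have : (\sum_i a i = (\sum_i a' i).+1)%N.
    rewrite (bigD1 i0) //= [X in _ = X.+1](bigD1 i0) //= /a' eqxx subn1 -addSn prednK //.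
    by congr (_ + _)%N; apply: eq_bigr => i /negbTE ->; rewrite subn0.
  by rewrite -sum_a card_A card_A' => -[].
have [L' [col_L' row_L']] := IH (A :\ x) a' card_A' sum_a'.
have x_free i : (i, x) \notin L'.
  apply/negP => ix; have := col_L' x; rewrite !inE eqxx /=.
  by move/cards0_eq/setP/(_ i); rewrite !inE ix.
exists ((i0, x) |: L'); split=> [j | i].
  have [-> | njx] := eqVneq j x.
    rewrite xA /= -(cards1 i0); apply: eq_card => i.
    by rewrite !inE xpair_eqE eqxx andbT (negbTE (x_free i)) orbF.
  have jA : (j \in A :\ x) = (j \in A) by rewrite !inE njx.
  rewrite -jA -col_L'.
  by apply: eq_card => i; rewrite !inE xpair_eqE (negbTE njx) andbF.
have [-> | ni0] := eqVneq i i0.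
  have -> : [set j | (i0, j) \in (i0, x) |: L'] = x |: [set j | (i0, j) \in L'].
    by apply/setP => j; rewrite !inE xpair_eqE eqxx.
  by rewrite cardsU1 inE (negbTE (x_free i0)) row_L' /a' eqxx add1n subn1 prednK.
have a'i : a' i = a i by rewrite /a' (negbTE ni0) subn0.
rewrite -a'i -row_L'.
by apply: eq_card => j; rewrite !inE xpair_eqE (negbTE ni0).
Qed.

Lemma Lset_nonempty {n m l} {alpha : {ffun 'I_n -> 'I_l.+1}} {tau : {set 'I_m}} :
  #|tau| = (\sum_i (alpha i : nat))%N -> exists L, in_Lset n m l alpha tau L.
Proof.
move=> /exists_distribution [L [col_L row_L]]; exists L.
by apply/andP; split; apply/forallP => x; rewrite ?col_L ?row_L.
Qed.

Lemma in_Lset_inj {n m l} {al al' : {ffun 'I_n -> 'I_l.+1}} {tau tau' : {set 'I_m}} {L} :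
  in_Lset n m l al tau L -> in_Lset n m l al' tau' L -> al = al' /\ tau = tau'.
Proof.
move=> /andP[/forallP col /forallP row] /andP[/forallP col' /forallP row']; split.
  by apply/ffunP => i; apply: val_inj => /=; rewrite -(eqP (row i)) (eqP (row' i)).
apply/setP => j; have := eqP (col j); rewrite (eqP (col' j)).
by case: (j \in tau); case: (j \in tau').
Qed.

Lemma in_Lset_cod_ok {n m l} {sigma : {set 'I_m}} {alpha : {ffun 'I_n -> 'I_l.+1}}
    {tau : {set 'I_m}} {L} :
  (\sum_i (alpha i : nat))%N = l -> [disjoint tau & sigma] ->
  in_Lset n m l alpha tau L -> cod_ok n m l sigma L.
Proof.
move=> sum_alpha tau_sigma /andP[/forallP col /forallP row]; apply/andP; split.
  by rewrite card_fibres (eq_bigr _ (fun i _ => eqP (row i))) sum_alpha.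
apply/forall_inP => -[i j] ij /=.
have j_tau : j \in tau.
  apply: contraT => /negbTE j_out; move: (eqP (col j)); rewrite j_out.
  by move/cards0_eq/setP/(_ i); rewrite !inE ij.
by apply: contraL tau_sigma => j_sigma; apply/pred0Pn; exists j; rewrite /= j_tau.
Qed.

Lemma sum_indicator (R : pzSemiRingType) (T : finType) (P : pred T) (y : T) :
  \sum_(x | P x) (x == y)%:R = (P y)%:R :> R.
Proof.
rewrite big_mkcond (bigD1 y) //= eqxx big1 ?addr0; first by case: (P y).
by move=> x /negbTE ->; case: (P x).
Qed.

Lemma q_coef_neq0 (k : fieldType) n m l sigma alpha rho S :
  (q_coef k n m l sigma alpha rho S != 0) =
  (sigma \subset rho) && in_Lset n m l alpha (rho :\: sigma) S.
Proof.
rewrite /q_coef; case: ifP => _ /=; last by rewrite eqxx.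
rewrite sum_indicator mulf_eq0 negb_or expf_neq0 ?oppr_eq0 ?oner_eq0 //=.
by case: in_Lset; rewrite ?oner_eq0 ?eqxx.
Qed.

Section QMatrix.

Variables (k : fieldType) (n m l : nat) (sigma : {set 'I_m}).
Hypothesis card_sigma : #|sigma| = n.

Local Notation Q := (q_mx k n m l sigma).

Lemma q_mx_col_sparse a a' b : Q a b != 0 -> Q a' b != 0 -> a = a'.
Proof.
rewrite !mxE !q_coef_neq0 => /andP[s_rho L_b] /andP[s_rho' L_b'].
have [alpha_eq tau_eq] := in_Lset_inj L_b L_b'.
apply: enum_val_inj; apply: val_inj.
rewrite [LHS]surjective_pairing [RHS]surjective_pairing alpha_eq.
by rewrite (setD_inj_supersets s_rho s_rho' tau_eq).
Qed.

Lemma q_mx_row_neq0 a : [exists b, Q a b != 0] = (sigma \subset (val (enum_val a)).2).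
Proof.
apply/existsP/idP => [[b] | s_rho]; first by rewrite mxE q_coef_neq0 => /andP[].
case E : (val (enum_val a)) s_rho (valP (enum_val a)) => [alpha rho] /= s_rho.
rewrite /dom_ok /= => /andP[/eqP sum_alpha /eqP card_rho].
have card_tau : #|rho :\: sigma| = (\sum_i (alpha i : nat))%N.
  by rewrite cardsDS // card_rho card_sigma sum_alpha addKn.
have [L L_tau] := Lset_nonempty card_tau.
have L_cod : cod_ok n m l sigma L.
  by apply: in_Lset_cod_ok sum_alpha _ L_tau; rewrite disjoints_subset setDE subsetIr.
exists (enum_rank (exist _ L L_cod : cod_idx n m l sigma)).
by rewrite mxE enum_rankK /= E /= q_coef_neq0 s_rho L_tau.
Qed.

Lemma card_q_mx_support : (1 <= l)%N ->
  #|support_rows Q| = ('C(n + l - 1, l) * 'C(m - n, l))%N.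
Proof.
move=> l_gt0; have -> : support_rows Q =
    [set a | sigma \subset (val (enum_val a : dom_idx n m l)).2].
  by apply/setP => a; rewrite !inE q_mx_row_neq0.
rewrite (card_enum_val_preim _ (fun x : dom_idx n m l => sigma \subset (val x).2)).
rewrite (card_sub_preim _ (dom_ok n m l) (fun p => sigma \subset p.2)).
rewrite -card_compositions // -(card_supersets l card_sigma) -cardsX.
by apply: eq_card => -[alpha rho]; rewrite !inE /dom_ok /= -andbA [X in _ && X]andbC.
Qed.

End QMatrix.

Theorem lemma4p13 (k : fieldType) (n m : nat) (sigma : {set 'I_m}) (l : nat) :
  (n <= m)%N -> #|sigma| = n -> (1 <= l)%N ->
  \rank (q_mx k n m l sigma) = ('C(n + l - 1, l) * 'C(m - n, l))%N.
Proof.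
move=> _ card_sigma l_gt0.
by rewrite rank_col_sparse ?card_q_mx_support //; exact: q_mx_col_sparse.
Qed.
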